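(* The compact subsets of the Sorgenfrey line $\mathbb R_\ell$ are exactly the well-founded subdcpos of $(\mathbb R,\ge)$. They are all countable.
   Context: The Sorgenfrey line $\mathbb R_\ell$ is $\mathbb R$ with the topology generated by the half-open intervals $[a,b[$, $a<b$. A subset $Q\subseteq\mathbb R$ is a chain in $(\mathbb R,\ge)$ automatically; it is a subdcpo of $(\mathbb R,\ge)$ if for every non-empty subset $D\subseteq Q$, the supremum of $D$ in $(\mathbb R,\ge)$ (i.e. $\inf D$ in the usual order) exists in $\mathbb R$ and belongs to $Q$. It is well-founded in $(\mathbb R,\ge)$ if it contains no infinite strictly increasing sequence $r_0<r_1<\cdots$ (in the usual order). *)

From Stdlib Require Import Reals List.
Open Scope R_scope.

Definition sorgenfrey_open (U : R -> Prop) : Prop :=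
  forall x, U x -> exists b, x < b /\ forall y, x <= y < b -> U y.

Definition sorgenfrey_compact (Q : R -> Prop) : Prop :=
  forall (I : Type) (U : I -> R -> Prop),
    (forall i, sorgenfrey_open (U i)) ->
    (forall x, Q x -> exists i, U i x) ->
    exists l : list I, forall x, Q x -> exists i, In i l /\ U i x.

(* m is the infimum (usual order) of D, i.e. the supremum of D in (R, >=). *)
Definition is_inf (D : R -> Prop) (m : R) : Prop :=
  (forall d, D d -> m <= d) /\ (forall m', (forall d, D d -> m' <= d) -> m' <= m).

(* Q is a subdcpo of (R, >=): every non-empty D ⊆ Q (all such D are directed,
   Q being a chain) has a supremum in (R,>=) (= inf D) which lies in Q. *)
Definition subdcpo_ge (Q : R -> Prop) : Prop :=
  forall D : R -> Prop,
    (forall x, D x -> Q x) -> (exists x, D x) ->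
    exists m, is_inf D m /\ Q m.

Definition well_founded_ge (Q : R -> Prop) : Prop :=
  ~ exists r : nat -> R, (forall n, Q (r n)) /\ (forall n, r n < r (S n)).

Definition countable_set (Q : R -> Prop) : Prop :=
  exists f : R -> nat, forall x y, Q x -> Q y -> f x = f y -> x = y.

(* Compactness in R_l can be tested on increasing countable covers by sets
   ]-oo,a[ ∪ U with U upward closed, all of which are open.  Such covers show
   that a compact Q is bounded below, contains the infimum of each of its
   non-empty subsets (otherwise Q ∩ [m, m + 1/n[ would be empty for some n), and
   has no strictly increasing sequence r (cover by ]-oo, r n[ ∪ {y > every r k}).
   Conversely, for a well-founded subdcpo Q, downward induction along Q shows
   that every tail Q ∩ [b,+oo[ is finitely covered: if [b,c[ lies in one open
   set, then either Q meets ]b,c[, or the next point inf (Q ∩ ]b,+oo[) of Q,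
   which lies in Q, is at least c.  Finally, well-foundedness leaves a gap
   ]p,x[ free of Q below each x in Q; a rational chosen in each gap is an
   injective code for the points of Q. *)
From Stdlib Require Import Reals.
From Stdlib Require Import Lra Lia List Classical ClassicalEpsilon ZArith Cantor.
Open Scope R_scope.

Lemma sorgenfrey_open_upper (U : R -> Prop) :
  (forall y z, U y -> y <= z -> U z) -> sorgenfrey_open U.
Proof.
  intros HU x Ux. exists (x + 1). split; [lra|].
  intros y Hy. apply (HU x); [exact Ux | lra].
Qed.

Lemma sorgenfrey_open_lt (a : R) : sorgenfrey_open (fun y => y < a).
Proof. intros x Hx. exists a. split; [exact Hx|]. intros y Hy; lra. Qed.

Lemma sorgenfrey_open_or (U V : R -> Prop) :
  sorgenfrey_open U -> sorgenfrey_open V -> sorgenfrey_open (fun y => U y \/ V y).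
Proof.
  intros HU HV x [Ux|Vx].
  - destruct (HU x Ux) as [b [Hxb Hb]]. exists b. split; [exact Hxb|].
    intros y Hy. left. apply Hb, Hy.
  - destruct (HV x Vx) as [b [Hxb Hb]]. exists b. split; [exact Hxb|].
    intros y Hy. right. apply Hb, Hy.
Qed.

Lemma sorgenfrey_open_lt_or_upper (a : R) (U : R -> Prop) :
  (forall y z, U y -> y <= z -> U z) -> sorgenfrey_open (fun y => y < a \/ U y).
Proof.
  intros HU. apply sorgenfrey_open_or; [apply sorgenfrey_open_lt|].
  apply sorgenfrey_open_upper, HU.
Qed.

Lemma sorgenfrey_compact_increasing_cover (Q : R -> Prop) (U : nat -> R -> Prop) :
  sorgenfrey_compact Q -> (forall n, sorgenfrey_open (U n)) ->
  (forall n m y, (n <= m)%nat -> U n y -> U m y) ->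
  (forall x, Q x -> exists n, U n x) -> exists N, forall x, Q x -> U N x.
Proof.
  intros HC Ho Hmono Hcov. destruct (HC nat U Ho Hcov) as [l Hl].
  exists (list_max l). intros x Qx. destruct (Hl x Qx) as [i [Hi Ui]].
  apply (Hmono i); [|exact Ui].
  assert (Hall := proj1 (list_max_le l (list_max l)) (le_n _)).
  rewrite Forall_forall in Hall. apply Hall, Hi.
Qed.

Lemma sorgenfrey_compact_bounded_below (Q : R -> Prop) :
  sorgenfrey_compact Q -> exists N, forall x, Q x -> N <= x.
Proof.
  intros HC.
  destruct (sorgenfrey_compact_increasing_cover Q (fun n y => - INR n <= y) HC)
    as [N HN].
  - intro n. apply sorgenfrey_open_upper. intros y z Hy Hz; lra.
  - intros n m y Hnm Hy. apply le_INR in Hnm. lra.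
  - intros x _. destruct (INR_unbounded (- x)) as [n Hn]. exists n. lra.
  - exists (- INR N). exact HN.
Qed.

Lemma sorgenfrey_compact_gap_above (Q : R -> Prop) (m : R) :
  sorgenfrey_compact Q -> ~ Q m ->
  exists e, 0 < e /\ forall y, Q y -> m <= y -> m + e <= y.
Proof.
  intros HC Qm.
  destruct (sorgenfrey_compact_increasing_cover Q
              (fun n y => y < m \/ m + / INR (S n) <= y) HC) as [N HN].
  - intro n. apply sorgenfrey_open_lt_or_upper. intros y z Hy Hz; lra.
  - intros n k y Hnk [Hy|Hy]; [left; exact Hy|right].
    assert (/ INR (S k) <= / INR (S n)); [|lra].
    apply Rinv_le_contravar; [apply lt_0_INR; lia | apply le_INR; lia].
  - intros x Qx. destruct (Rlt_le_dec x m) as [Hxm|Hmx]; [exists 0%nat; left; exact Hxm|].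
    destruct (Rle_lt_or_eq_dec _ _ Hmx) as [Hlt|<-]; [|contradiction].
    destruct (archimed_cor1 (x - m)) as [K [HK HK0]]; [lra|].
    exists (K - 1)%nat. right. replace (S (K - 1)) with K by lia. lra.
  - exists (/ INR (S N)). split; [apply Rinv_0_lt_compat, lt_0_INR; lia|].
    intros y Qy Hmy. destruct (HN y Qy) as [Hy|Hy]; lra.
Qed.

Lemma is_inf_exists (D : R -> Prop) :
  (exists x, D x) -> (exists N, forall d, D d -> N <= d) -> exists m, is_inf D m.
Proof.
  intros [d0 Hd0] [N HN].
  destruct (completeness (fun x => D (- x))) as [l [Hub Hlub]].
  - exists (- N). intros x Hx. specialize (HN _ Hx). lra.
  - exists (- d0). rewrite Ropp_involutive. exact Hd0.
  - exists (- l). split.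
    + intros d Hd. assert (H := Hub (- d)). cbv beta in H.
      rewrite Ropp_involutive in H. specialize (H Hd). lra.
    + intros m' Hm'. assert (l <= - m'); [|lra].
      apply Hlub. intros x Hx. specialize (Hm' _ Hx). lra.
Qed.

Lemma sorgenfrey_compact_subdcpo_ge (Q : R -> Prop) :
  sorgenfrey_compact Q -> subdcpo_ge Q.
Proof.
  intros HC D HDQ Hne.
  destruct (sorgenfrey_compact_bounded_below Q HC) as [N HN].
  destruct (is_inf_exists D Hne) as [m [Hlb Hglb]].
  { exists N. intros d Hd. apply HN, HDQ, Hd. }
  exists m. split; [split; assumption|].
  apply NNPP. intro Qm.
  destruct (sorgenfrey_compact_gap_above Q m HC Qm) as [e [He Hgap]].
  assert (m + e <= m); [|lra].
  apply Hglb. intros d Hd. apply Hgap; [apply HDQ, Hd | apply Hlb, Hd].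
Qed.

Lemma sorgenfrey_compact_well_founded_ge (Q : R -> Prop) :
  sorgenfrey_compact Q -> well_founded_ge Q.
Proof.
  intros HC [r [HrQ Hr]].
  assert (Hmono : forall n k, (n <= k)%nat -> r n <= r k).
  { intros n k Hnk. apply Rge_le, growing_prop; [|exact Hnk].
    intro j. left. apply Hr. }
  destruct (sorgenfrey_compact_increasing_cover Q
              (fun n y => y < r n \/ forall k, r k < y) HC) as [N HN].
  - intro n. apply sorgenfrey_open_lt_or_upper.
    intros y z Hy Hz k. specialize (Hy k). lra.
  - intros n m y Hnm [Hy|Hy]; [left|right; exact Hy].
    specialize (Hmono n m Hnm). lra.
  - intros x _. destruct (classic (forall k, r k < x)) as [H|H].
    + exists 0%nat. right. exact H.
    + apply not_all_ex_not in H. destruct H as [k Hk].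
      exists (S k). left. specialize (Hr k). lra.
  - destruct (HN (r N) (HrQ N)) as [H|H]; [lra|]. specialize (H N). lra.
Qed.

Lemma well_founded_ge_max (Q B : R -> Prop) :
  well_founded_ge Q -> (forall x, B x -> Q x) -> (exists x, B x) ->
  exists b, B b /\ forall y, B y -> y <= b.
Proof.
  intros Hwf HBQ [b0 Hb0]. apply NNPP. intro Hnomax. apply Hwf.
  assert (Hnext : forall x, B x -> exists y, B y /\ x < y).
  { intros x Bx. apply NNPP. intro Hx. apply Hnomax. exists x. split; [exact Bx|].
    intros y By. apply Rnot_lt_le. intro Hxy. apply Hx. exists y. split; assumption. }
  set (next := fun x => epsilon (inhabits 0) (fun y => B y /\ x < y)).
  assert (Hnext_spec : forall x, B x -> B (next x) /\ x < next x).
  { intros x Bx. apply epsilon_spec, Hnext, Bx. }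
  set (r := fun n => Nat.iter n next b0).
  assert (Hr : forall n, B (r n)).
  { induction n as [|n IH]; [exact Hb0|]. apply (Hnext_spec _ IH). }
  exists r. split; [intro n; apply HBQ, Hr|]. intro n. apply (Hnext_spec _ (Hr n)).
Qed.

Lemma well_founded_ge_ind (Q P : R -> Prop) :
  well_founded_ge Q ->
  (forall x, Q x -> (forall y, Q y -> x < y -> P y) -> P x) ->
  forall x, Q x -> P x.
Proof.
  intros Hwf Hstep x0 Qx0. apply NNPP. intro Px0.
  destruct (well_founded_ge_max Q (fun x => Q x /\ ~ P x) Hwf) as [b [[Qb Pb] Hb]].
  { intros x [Qx _]. exact Qx. } { exists x0. split; assumption. }
  apply Pb, Hstep; [exact Qb|]. intros y Qy Hby. apply NNPP. intro Py.
  specialize (Hb y (conj Qy Py)). lra.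
Qed.

Lemma well_founded_ge_gap_below (Q : R -> Prop) (x : R) :
  well_founded_ge Q -> exists p, p < x /\ forall y, Q y -> y < x -> y <= p.
Proof.
  intros Hwf. destruct (classic (exists y, Q y /\ y < x)) as [Hex|Hnone].
  - destruct (well_founded_ge_max Q (fun y => Q y /\ y < x) Hwf) as [p [[_ Hpx] Hp]].
    { intros y [Qy _]. exact Qy. } { exact Hex. }
    exists p. split; [exact Hpx|]. intros y Qy Hyx. apply Hp. split; assumption.
  - exists (x - 1). split; [lra|]. intros y Qy Hyx. exfalso. apply Hnone.
    exists y. split; assumption.
Qed.

Lemma subdcpo_ge_next_above (Q : R -> Prop) (b c : R) :
  subdcpo_ge Q -> b < c -> (exists y, Q y /\ b < y) ->
  exists y, Q y /\ b < y /\ forall z, Q z -> b < z < y -> z < c.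
Proof.
  intros Hd Hbc Hex.
  destruct (classic (exists y, Q y /\ b < y < c)) as [[y [Qy Hy]]|Hnone].
  - exists y. split; [exact Qy|]. split; [apply Hy|]. intros z _ Hz. lra.
  - destruct (Hd (fun y => Q y /\ b < y)) as [t [[Hlb Hglb] Qt]];
      [intros y [Qy _]; exact Qy | exact Hex |].
    assert (Hct : c <= t).
    { apply Hglb. intros y [Qy Hby]. apply Rnot_lt_le. intro Hyc.
      apply Hnone. exists y. split; [exact Qy | lra]. }
    exists t. split; [exact Qt|]. split; [lra|]. intros z Qz Hz.
    assert (t <= z) by (apply Hlb; split; [exact Qz | lra]). lra.
Qed.

Section TailCover.

Variables (Q : R -> Prop) (I : Type) (U : I -> R -> Prop).
Hypothesis U_open : forall i, sorgenfrey_open (U i).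
Hypothesis U_cover : forall x, Q x -> exists i, U i x.

Definition tail_covered (x : R) : Prop :=
  exists l : list I, forall y, Q y -> x <= y -> exists i, In i l /\ U i y.

Lemma tail_covered_step (b : R) :
  subdcpo_ge Q -> Q b -> (forall y, Q y -> b < y -> tail_covered y) -> tail_covered b.
Proof.
  intros Hd Qb IH. destruct (U_cover b Qb) as [i0 Ui0].
  destruct (U_open i0 b Ui0) as [c [Hbc Hbasic]].
  destruct (classic (exists y, Q y /\ b < y)) as [Hex|Hnone].
  - destruct (subdcpo_ge_next_above Q b c Hd Hbc Hex) as [y [Qy [Hby Hgap]]].
    destruct (IH y Qy Hby) as [l Hl]. exists (i0 :: l). intros z Qz Hbz.
    destruct (Rlt_le_dec z y) as [Hzy|Hyz].
    + exists i0. split; [left; reflexivity|]. apply Hbasic. split; [exact Hbz|].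
      destruct (Rle_lt_or_eq_dec _ _ Hbz) as [Hlt| <-]; [apply Hgap; auto | exact Hbc].
    + destruct (Hl z Qz Hyz) as [i [Hi Ui]]. exists i. split; [right; exact Hi | exact Ui].
  - exists (i0 :: nil). intros z Qz Hbz. exists i0. split; [left; reflexivity|].
    destruct (Rle_lt_or_eq_dec _ _ Hbz) as [Hlt| <-]; [|exact Ui0].
    exfalso. apply Hnone. exists z. split; assumption.
Qed.

End TailCover.

Lemma subdcpo_well_founded_ge_compact (Q : R -> Prop) :
  subdcpo_ge Q -> well_founded_ge Q -> sorgenfrey_compact Q.
Proof.
  intros Hd Hwf I U Ho Hc.
  assert (Htail : forall x, Q x -> tail_covered Q I U x).
  { apply (well_founded_ge_ind Q); [exact Hwf|].
    intros b Qb IH. apply tail_covered_step; assumption. }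
  destruct (classic (exists x, Q x)) as [Hne|Hempty].
  - destruct (Hd Q (fun x Qx => Qx) Hne) as [m [[Hlb _] Qm]].
    destruct (Htail m Qm) as [l Hl]. exists l. intros x Qx. apply Hl; [exact Qx|].
    apply Hlb, Qx.
  - exists nil. intros x Qx. exfalso. apply Hempty. exists x. exact Qx.
Qed.

(* Every rational is some (a - b) / d; the junk value [x / 0 = 0] at d = 0 is harmless. *)
Definition rat_enum (n : nat) : R :=
  let (a, k) := Cantor.of_nat n in
  let (b, d) := Cantor.of_nat k in (INR a - INR b) / INR d.

Lemma rat_enum_dense (p x : R) : p < x -> exists n, p < rat_enum n < x.
Proof.
  intros Hpx. destruct (archimed_cor1 (x - p)) as [d [Hd Hd0]]; [lra|].
  set (k := up (p * INR d)).
  destruct (archimed (p * INR d)) as [Hk1 Hk2]. fold k in Hk1, Hk2.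
  exists (Cantor.to_nat (Z.to_nat k, Cantor.to_nat (Z.to_nat (- k), d))).
  unfold rat_enum. rewrite !Cantor.cancel_of_to.
  assert (HZ : (Z.of_nat (Z.to_nat k) - Z.of_nat (Z.to_nat (- k)) = k)%Z) by lia.
  rewrite !INR_IZR_INZ, <- minus_IZR, HZ, <- INR_IZR_INZ.
  assert (Hdpos : 0 < INR d) by (apply lt_0_INR; lia).
  assert (Hinv : / INR d * INR d = 1) by (apply Rinv_l; lra).
  split; apply Rmult_lt_reg_r with (INR d); try exact Hdpos;
    unfold Rdiv; rewrite Rmult_assoc, Rinv_l by lra; [lra|].
  assert ((x - p) * INR d > / INR d * INR d) by (apply Rmult_lt_compat_r; lra).
  nra.
Qed.

Lemma countable_of_gaps_below (Q : R -> Prop) :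
  (forall x, Q x -> exists p, p < x /\ forall y, Q y -> y < x -> y <= p) ->
  countable_set Q.
Proof.
  intros Hgaps.
  set (separates := fun x n => rat_enum n < x /\ forall y, Q y -> y < x -> y < rat_enum n).
  set (code := fun x => epsilon (inhabits 0%nat) (separates x)).
  assert (Hcode : forall x, Q x -> separates x (code x)).
  { intros x Qx. apply epsilon_spec. destruct (Hgaps x Qx) as [p [Hpx Hp]].
    destruct (rat_enum_dense p x Hpx) as [n [Hpn Hnx]].
    exists n. split; [exact Hnx|]. intros y Qy Hyx. specialize (Hp y Qy Hyx). lra. }
  assert (Hlt : forall x x', Q x -> Q x' -> x < x' -> code x <> code x').
  { intros x x' Qx Qx' Hxx' Heq.
    destruct (Hcode x Qx) as [Hx _]. destruct (Hcode x' Qx') as [_ Hx'].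
    specialize (Hx' x Qx Hxx'). rewrite Heq in Hx. lra. }
  exists code. intros x x' Qx Qx' Heq.
  destruct (total_order_T x x') as [[Hxx'|Hxx']|Hxx']; [| exact Hxx' |].
  - exfalso. exact (Hlt x x' Qx Qx' Hxx' Heq).
  - exfalso. exact (Hlt x' x Qx' Qx Hxx' (eq_sym Heq)).
Qed.

Theorem theorem4p15 :
  forall Q : R -> Prop,
    (sorgenfrey_compact Q <-> (subdcpo_ge Q /\ well_founded_ge Q)) /\
    (sorgenfrey_compact Q -> countable_set Q).
Proof.
  intros Q. split; [split|].
  - intros HC. split.
    + apply sorgenfrey_compact_subdcpo_ge, HC.
    + apply sorgenfrey_compact_well_founded_ge, HC.
  - intros [Hd Hwf]. apply subdcpo_well_founded_ge_compact; assumption.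
  - intros HC. apply countable_of_gaps_below. intros x _.
    apply well_founded_ge_gap_below, sorgenfrey_compact_well_founded_ge, HC.
Qed.
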